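(* Let $F$ be a family, $w$ a function from elements to $\mathbb{N}$ with $w(a)>0$ for some $a\in\bigcup F$, and $K,S$ sets with $K\cup S=\bigcup F$ and $K\cap S=\emptyset$. If $\mathrm{hs}(K',S,F,w,\bigcup F)\ge 0$ for every $K'\subseteq K$, then $F$ is Frankl's.
   Context: All sets and families are finite. $F$ is Frankl's if there is $a \in \bigcup F$ with $2\cdot|\{A\in F: a\in A\}| \ge |F|$. $\mathrm{sw}(w,A)=\sum_{a\in A}w(a)$; $\mathrm{ss}(A,w,X)=2\,\mathrm{sw}(w,A)-\mathrm{sw}(w,X)\in\mathbb{Z}$. The $S$-hypercube with base $K$ is $H(K,S)=\{A : K\subseteq A\subseteq K\cup S\}$. The hyper-share is $\mathrm{hs}(K,S,F,w,X)=\sum_{A\in H(K,S)\cap F}\mathrm{ss}(A,w,X)$. *)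

From HB Require Import structures.
From mathcomp Require Import all_boot all_order all_algebra.
Set Implicit Arguments. Unset Strict Implicit. Unset Printing Implicit Defensive.
Import Order.TTheory GRing.Theory Num.Theory.

Definition Ufam (T : finType) (F : {set {set T}}) : {set T} := \bigcup_(A in F) A.

Definition frankl (T : finType) (F : {set {set T}}) : Prop :=
  exists2 a, a \in Ufam F & (#|F| <= 2 * #|[set A in F | a \in A]|)%N.

Definition sw (T : finType) (w : T -> nat) (A : {set T}) : nat := (\sum_(a in A) w a)%N.

Definition ss (T : finType) (A : {set T}) (w : T -> nat) (X : {set T}) : int :=
  ((2 * sw w A)%N%:Z - (sw w X)%:Z)%R.

Definition hcube (T : finType) (K S : {set T}) : {set {set T}} :=
  [set A : {set T} | K \subset A & A \subset K :|: S].

Definition hs (T : finType) (K S : {set T}) (F : {set {set T}}) (w : T -> nat)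
  (X : {set T}) : int :=
  (\sum_(A in hcube K S :&: F) ss A w X)%R.

From HB Require Import structures.
From mathcomp Require Import all_boot all_order all_algebra.
Import Order.TTheory GRing.Theory Num.Theory.

(* Every member A of F lies in U = K ∪ S, and since K and S are
   disjoint, A lies in exactly one hypercube H(K', S) with K' ⊆ K, namely the
   one with base K' = A ∩ K.  Summing the hypotheses over all K' ⊆ K therefore
   gives  Σ_{A∈F} ss(A, w, U) ≥ 0,  i.e.  |F|·sw(w, U) ≤ 2·Σ_{A∈F} sw(w, A).
   By double counting, Σ_{A∈F} sw(w, A) = Σ_a deg(a)·w(a), where deg(a) is the
   number of members of F containing a.  If F were not Frankl's, every a ∈ U
   would satisfy 2·deg(a) < |F|, and because some a ∈ U has positive weight this
   would make 2·Σ_a deg(a)·w(a) < |F|·sw(w, U), a contradiction. *)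

Section Hypercubes.

Variables (T : finType) (K S : {set T}).
Hypothesis disjKS : K :&: S = set0.

Lemma mem_hcube_trace (K' A : {set T}) :
  K' \subset K -> A \subset K :|: S -> (A \in hcube K' S) = (A :&: K == K').
Proof.
move=> sK'K sAKS; rewrite inE; apply/andP/eqP => [[sK'A sAK'S] | <-].
- apply/eqP; rewrite eqEsubset andbC subsetI sK'A sK'K /=.
  apply/subsetP => x /setIP[xA xK].
  have /setUP[// | xS] := subsetP sAK'S x xA.
  have : x \in K :&: S by rewrite inE xK xS.
  by rewrite disjKS inE.
- split; first exact: subsetIl.
  apply/subsetP => x xA; rewrite !inE xA /=.
  by have := subsetP sAKS x xA; rewrite inE.
Qed.

Lemma sum_hs_subsets (F : {set {set T}}) (w : T -> nat) (X : {set T}) :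
  (forall A, A \in F -> A \subset K :|: S) ->
  (\sum_(K' : {set T} | K' \subset K) hs K' S F w X = \sum_(A in F) ss A w X)%R.
Proof.
move=> sFKS.
rewrite [RHS](partition_big (fun A => A :&: K) (fun K' => K' \subset K)) /=;
  last by move=> A _; exact: subsetIr.
apply: eq_bigr => K' sK'K; rewrite /hs; apply: eq_bigl => A.
rewrite inE andbC; case AF: (A \in F) => //=.
by rewrite mem_hcube_trace // sFKS.
Qed.

End Hypercubes.

Section Averaging.

Variables (T : finType) (F : {set {set T}}) (w : T -> nat).

Definition degree (a : T) : nat := #|[set A in F | a \in A]|.

Lemma degree_notin_Ufam (a : T) : a \notin Ufam F -> degree a = 0%N.
Proof.
move=> aU; apply/eqP; rewrite cards_eq0; apply/eqP/setP => A.
rewrite !inE; apply/negbTE/andP => -[AF aA]; move/negP: aU; apply.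
by apply/bigcupP; exists A.
Qed.

Lemma sum_sw_degree : (\sum_(A in F) sw w A = \sum_a degree a * w a)%N.
Proof.
rewrite /sw; under eq_bigr do rewrite big_mkcond /=.
rewrite exchange_big /=; apply: eq_bigr => a _.
rewrite /degree -sum1_card big_distrl /= big_mkcond /=.
rewrite [in RHS](big_mkcond (fun A => A \in _)) /=; apply: eq_bigr => A _.
by rewrite inE; case: (A \in F); case: (a \in A); rewrite ?mul1n.
Qed.

Lemma sum_ss_ge0 (X : {set T}) :
  (0 <= \sum_(A in F) ss A w X)%R -> (#|F| * sw w X <= 2 * \sum_(A in F) sw w A)%N.
Proof.
rewrite /ss sumrB -!(big_morph Posz PoszD (erefl _)) sum_nat_const.
by rewrite subr_ge0 lez_nat -big_distrr.
Qed.

Lemma frankl_of_weighted_share :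
  (exists2 a, a \in Ufam F & (0 < w a)%N) ->
  (#|F| * sw w (Ufam F) <= 2 * \sum_(A in F) sw w A)%N ->
  frankl F.
Proof.
move=> [a0 a0U wa0] share; set U := Ufam F.
have [/existsP[a /andP[aU ha]] | /existsPn small] :=
  boolP [exists a, (a \in U) && (#|F| <= 2 * degree a)%N]; first by exists a.
have lt_half a : a \in U -> (2 * degree a < #|F|)%N.
  by move=> aU; move: (small a); rewrite aU /= ltnNge.
have le_term a : (2 * degree a * w a <= (a \in U) * #|F| * w a)%N.
  case aU: (a \in U); first by rewrite mul1n leq_mul2r ltnW ?orbT ?lt_half.
  by rewrite degree_notin_Ufam ?aU // muln0.
have lt_sum : (\sum_a 2 * degree a * w a < \sum_a (a \in U) * #|F| * w a)%N.
  rewrite (bigD1 a0) //= [X in (_ < X)%N](bigD1 a0) //= -addSn.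
  by rewrite leq_add ?leq_sum // a0U mul1n ltn_mul2r wa0 lt_half.
have sum_U : (\sum_a (a \in U) * #|F| * w a = #|F| * sw w U)%N.
  rewrite /sw big_distrr /= [in RHS]big_mkcond /=; apply: eq_bigr => a _.
  by case: (a \in U); rewrite ?mul1n ?mul0n.
move: share; rewrite -sum_U sum_sw_degree big_distrr /= leqNgt.
by under eq_bigr do rewrite mulnA; rewrite lt_sum.
Qed.

End Averaging.

Theorem lemma3 (T : finType) (F : {set {set T}}) (w : T -> nat)
  (K S : {set T}) :
  (exists2 a, a \in Ufam F & (0 < w a)%N) ->
  K :|: S = Ufam F ->
  K :&: S = set0 ->
  (forall K' : {set T}, K' \subset K -> (0 <= hs K' S F w (Ufam F))%R) ->
  frankl F.
Proof.
move=> pos_weight defU disjKS hs_ge0.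
apply: (frankl_of_weighted_share _ _ _ pos_weight); apply: sum_ss_ge0.
have sFKS A : A \in F -> A \subset K :|: S by rewrite defU; exact: bigcup_sup.
rewrite -(sum_hs_subsets _ _ _ disjKS F w (Ufam F) sFKS).
by apply: sumr_ge0 => K' sK'K; exact: hs_ge0.
Qed.
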